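(* Let $\mathbb G$ be a cyclic group (i.e., $\mathbb Z_n$ for some $n\ge1$, or $\mathbb Z$) with generator $1$, let $(\mathbf A,\mathbf A')$ be a promise template and $k\ge1$. The $\mathbb G$-affine $k$-consistency relaxation solves $\mathrm{PCSP}(\mathbf A,\mathbf A')$ if and only if the $k$-consistency reduction $\kappa_k^{\mathbf A,\mathbf G}$ is a reduction from $\mathrm{PCSP}(\mathbf A,\mathbf A')$ to $\mathrm{CSP}(\mathbf G)$.
   Context: Structures. A (multisorted relational) signature consists of types and relation symbols, each symbol $R$ having an arity $\mathrm{ar}_R$, a tuple of types. A structure $\mathbf A$ consists of a set $A_t$ per type and relations $R^{\mathbf A}\subseteq A_{\mathrm{ar}_R(1)}\times\dots\times A_{\mathrm{ar}_R(k)}$. A homomorphism is a type-preserving family of maps preserving all relations; write $\mathbf A\to\mathbf B$. For a finite set $F$, $\mathbf B^F$ has domains $B_t^F$ and $(b_1,\dots,b_m)\in R^{\mathbf B^F}$ iff $(b_1(i),\dots,b_m(i))\in R^{\mathbf B}$ for all $i\in F$. Promise CSP. A promise template is a pair $(\mathbf A,\mathbf A')$ of structures of the same signature, $\mathbf A$ finite, $\mathbf A\to\mathbf A'$. $\mathrm{PCSP}(\mathbf A,\mathbf A')$: given finite $\mathbf X$, answer yes if $\mathbf X\to\mathbf A$, no if $\mathbf X\not\to\mathbf A'$; $\mathrm{CSP}(\mathbf B)=\mathrm{PCSP}(\mathbf B,\mathbf B)$. A map $\psi$ is a reduction from $\mathrm{PCSP}(\mathbf A,\mathbf A')$ to $\mathrm{PCSP}(\mathbf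 B,\mathbf B')$ if $\mathbf X\to\mathbf A\Rightarrow\psi(\mathbf X)\to\mathbf B$ and $\psi(\mathbf X)\to\mathbf B'\Rightarrow\mathbf X\to\mathbf A'$. Group template. For an Abelian group $\mathbb G$, $\mathbf G$ is the single-sorted structure with domain $G$, the ternary relation $\{(x_1,x_2,y)\mid x_1+x_2=y\}$, and a unary relation $\{b\}$ for each $b\in G$. $k$-consistency. For $\mathbf X$ and a set $K$ of at most $k$ elements of $\mathbf X$, a partial homomorphism $K\to\mathbf A$ is a type-preserving $f\colon K\to A$ with $(f(v_1),\dots,f(v_m))\in R^{\mathbf A}$ for every $(v_1,\dots,v_m)\in R^{\mathbf X}$ with all $v_i\in K$. Enforcing $k$-consistency: (1) let $\mathcal F_K$ be the set of partial homomorphisms $K\to\mathbf A$ for each $|K|\le k$; (2) for each $L\subset K$ remove from $\mathcal F_L$ elements not extending to some $g\in\mathcal F_K$ and from $\mathcal F_K$ every $g$ with $g|_L\notin\mathcal F_L$; (3) repeat (2) until stable. The $k$-consistency reduction $\kappa_k^{\mathbf A,\mathbf B}(\mathbf X)$ continues: (4) for each $K$ take a copy of $\mathbf B^{\mathcal F_K}$ with elements $(K;b)$; (5) for $L\subseteq K$ identify $(K;b\circ\rho_{K,L})$ with $(L;b)$ where $\rho_{K,L}(g)=g|_L$; output the quotient by the generated equivalence relation, relations being images. $\mathbb G$-affine $k$-consistency relaxation. Given $\mathbf X$, compute the final sets $\mathcal F_K$ from steps (1)–(3), and form the system of equations over $\mathbb G$ with variables $x_{K,f}\in G$ ($|K|\le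 k$, $f\in\mathcal F_K$): $\sum_{f\in\mathcal F_K}x_{K,f}=1$ for each $K$, and $\sum_{f\in\mathcal F_K,f|_L=g}x_{K,f}=x_{L,g}$ for each $L\subset K$, $g\in\mathcal F_L$. The relaxation accepts iff the system has a solution; it solves $\mathrm{PCSP}(\mathbf A,\mathbf A')$ if it rejects every $\mathbf X$ with $\mathbf X\not\to\mathbf A'$ (it always accepts when $\mathbf X\to\mathbf A$). *)

From HB Require Import structures.
From mathcomp Require Import all_boot all_algebra.
From mathcomp Require Import boolp.
From Stdlib Require Import Relation_Operators.

Set Implicit Arguments.
Unset Strict Implicit.
Unset Printing Implicit Defensive.
Import GRing.Theory.
Local Open Scope ring_scope.

(* A structure over carrier T: every element has a type (sort); the    *)
(* domain A_t is {a | sty a = t}.  Relations are sets of tuples (seqs) *)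
(* which must be well-typed w.r.t. the arity.                          *)
Record signature := Signature {
  sort : Type;
  sym : Type;
  arity : sym -> seq sort }.

Record structure (S : signature) (T : Type) := Structure {
  sty : T -> sort S;
  srel : sym S -> seq T -> Prop;
  srel_wt : forall R s, srel R s -> map sty s = arity R }.
Arguments sty {S T}.
Arguments srel {S T}.

Definition is_hom (S : signature) (T U : Type) (A : structure S T)
    (B : structure S U) (f : T -> U) : Prop :=
  (forall x, sty B (f x) = sty A x) /\
  (forall R s, srel A R s -> srel B R (map f s)).

Definition homExists (S : signature) (T U : Type) (A : structure S T)
    (B : structure S U) : Prop := exists f, is_hom A B f.

Definition is_reduction (S S' : signature) (TA TA' TB TB' : Type)
    (A : structure S TA) (A' : structure S TA')
    (B : structure S' TB) (B' : structure S' TB')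
    (psi : forall X : finType, structure S X -> {T : Type & structure S' T}) : Prop :=
  forall (X : finType) (XX : structure S X),
    (homExists XX A -> homExists (projT2 (psi X XX)) B) /\
    (homExists (projT2 (psi X XX)) B' -> homExists XX A').

(* A partial map K -> A is a finite function X -> option TA whose      *)
(* support is exactly K.                                               *)
Notation pmap X TA := {ffun X -> option TA}.

Definition restr (X TA : finType) (L : {set X}) (f : pmap X TA) : pmap X TA :=
  [ffun x => if x \in L then f x else None].

Definition partial_hom (S : signature) (X TA : finType) (XX : structure S X)
    (A : structure S TA) (K : {set X}) (f : pmap X TA) : Prop :=
  (forall x, (x \in K) = (f x != None)) /\
  (forall x a, f x = Some a -> sty A a = sty XX x) /\
  (forall R vs, srel XX R vs -> all (fun v => v \in K) vs ->
      exists2 as_, map f vs = map Some as_ & srel A R as_).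

Definition kc_init (S : signature) (X TA : finType) (XX : structure S X)
    (A : structure S TA) (k : nat) : {set X} -> {set pmap X TA} :=
  fun K => [set f | (#|K| <= k)%N && `[< partial_hom XX A K f >]].

(* step (2), applied simultaneously to all pairs L \subset K, |K| <= k *)
Definition kc_step (X TA : finType) (k : nat)
    (F : {set X} -> {set pmap X TA}) : {set X} -> {set pmap X TA} :=
  fun L => [set f in F L |
     [forall K : {set X}, ((L \subset K) && (#|K| <= k)%N) ==>
                            [exists g, (g \in F K) && (restr L g == f)]]
     && [forall L' : {set X}, (L' \subset L) ==> (restr L' f \in F L')]].

(* step (3): repeat until stable.  Every non-stable step removes at    *)
(* least one element, so #|{set X}| * #|pmap X TA| + 1 iterations      *)
(* reach the stable family.                                            *)
Definition kc_family (S : signature) (X TA : finType) (XX : structure S X)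
    (A : structure S TA) (k : nat) : {set X} -> {set pmap X TA} :=
  iter (#|{: {set X}}| * #|{: pmap X TA}|).+1 (@kc_step X TA k) (kc_init XX A k).

Definition affine_accepts (S : signature) (X TA : finType) (XX : structure S X)
    (A : structure S TA) (k : nat) (G : zmodType) (one : G) : Prop :=
  let F := kc_family XX A k in
  exists x : {set X} -> pmap X TA -> G,
    (forall K : {set X}, (#|K| <= k)%N -> \sum_(f in F K) x K f = one) /\
    (forall K L : {set X}, (#|K| <= k)%N -> L \subset K ->
       forall h, h \in F L ->
         \sum_(f in F K | restr L f == h) x K f = x L h).

Definition affine_solves (S : signature) (TA0 : finType) (TA' : Type)
    (A : structure S TA0) (A' : structure S TA') (k : nat)
    (G : zmodType) (one : G) : Prop :=
  forall (X : finType) (XX : structure S X),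
    ~ homExists XX A' -> ~ affine_accepts XX A k one.

(* The k-consistency reduction kappa_k^{A,B}(X), for a single-sorted   *)
(* target B (all elements of sort s0).  Elements of the copy of        *)
(* B^{F_K} are represented by pairs (K, b) with b : pmap -> TB (only   *)
(* the values on F_K matter; this is handled by the identification     *)
(* with L = K).  The carrier is the set of equivalence classes of the  *)
(* equivalence relation generated by (K; b o rho_{K,L}) ~ (L; b).      *)
Definition Kidx (X : finType) (k : nat) := {K : {set X} | (#|K| <= k)%N}.

Definition kdom (X TA : finType) (k : nat) (TB : Type) :=
  (Kidx X k * (pmap X TA -> TB))%type.

Definition kbase (S : signature) (X TA : finType) (XX : structure S X)
    (A : structure S TA) (k : nat) (TB : Type) (d e : @kdom X TA k TB) : Prop :=
  (proj1_sig e.1 \subset proj1_sig d.1) /\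
  (forall f, f \in kc_family XX A k (proj1_sig d.1) ->
      d.2 f = e.2 (restr (proj1_sig e.1) f)).

Definition kequiv (S : signature) (X TA : finType) (XX : structure S X)
    (A : structure S TA) (k : nat) (TB : Type) :=
  clos_refl_sym_trans (@kdom X TA k TB) (@kbase S X TA XX A k TB).

Definition kcarrier (S : signature) (X TA : finType) (XX : structure S X)
    (A : structure S TA) (k : nat) (TB : Type) :=
  {P : @kdom X TA k TB -> Prop | exists d, P = @kequiv S X TA XX A k TB d}.

Definition kproj (S : signature) (X TA : finType) (XX : structure S X)
    (A : structure S TA) (k : nat) (TB : Type) (d : @kdom X TA k TB) :
    @kcarrier S X TA XX A k TB :=
  exist _ (@kequiv S X TA XX A k TB d) (ex_intro _ d erefl).

Definition krel (S : signature) (X TA : finType) (XX : structure S X)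
    (A : structure S TA) (k : nat) (S' : signature) (s0 : sort S')
    (TB : Type) (B : structure S' TB)
    (R : sym S') (qs : seq (@kcarrier S X TA XX A k TB)) : Prop :=
  map (fun _ => s0) qs = arity R /\
  exists (K : Kidx X k) (bs : seq (pmap X TA -> TB)),
    qs = map (fun b => @kproj S X TA XX A k TB (K, b)) bs /\
    (forall f, f \in kc_family XX A k (proj1_sig K) ->
       srel B R (map (fun b => b f) bs)).

Definition kappa (S : signature) (X TA : finType) (XX : structure S X)
    (A : structure S TA) (k : nat) (S' : signature) (s0 : sort S')
    (TB : Type) (B : structure S' TB) : structure S' (@kcarrier S X TA XX A k TB) :=
  @Structure S' _ (fun _ => s0) (@krel S X TA XX A k S' s0 TB B)
    (fun R qs H => proj1 H).

Definition sigG (G : Type) : signature :=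
  @Signature unit (option G)
    (fun o => if o is None then [:: tt; tt; tt] else [:: tt]).

Definition Grel (G : zmodType) (R : option G) (s : seq G) : Prop :=
  match R with
  | None => exists x1 x2 y, s = [:: x1; x2; y] /\ x1 + x2 = y
  | Some b => s = [:: b]
  end.

Lemma Grel_wt (G : zmodType) (R : option G) (s : seq G) :
  Grel R s -> map (fun _ => tt) s = @arity (sigG G) R.
Proof.
case: R => [b|] /=; first by move=> ->.
by move=> [x1 [x2 [y [-> _]]]].
Qed.

Definition Gtemplate (G : zmodType) : structure (sigG G) G :=
  @Structure (sigG G) G (fun _ => tt) (@Grel G) (@Grel_wt G).

Definition kappaG (S : signature) (TA : finType) (A : structure S TA) (k : nat)
    (G : zmodType) :
    forall X : finType, structure S X -> {T : Type & structure (sigG G) T} :=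
  fun X XX => existT _ _ (@kappa S X TA XX A k (sigG G) tt G (Gtemplate G)).

(* Both sides of the equivalence are statements about instances X, and the
   theorem follows from two facts about a single instance:
   - soundness: a homomorphism kappa(X) -> G yields a solution of the affine
     system, namely x_{K,f} = phi(K; indicator of f); this holds for every
     Abelian group, because each copy of G^{F_K} inside kappa(X) carries the
     pointwise relations of G, so phi is affine on it;
   - completeness: a solution x yields the homomorphism (K; b) |->
     sum_f b(f) * x_{K,f}, which is well defined on the quotient thanks to the
     compatibility equations; this needs the multiplication of the ring
     structure of a cyclic group.
   Together with the fact that the relaxation accepts every X -> A (the
   indicators of the restrictions of a homomorphism never get removed by
   consistency enforcement), these give both implications. *)
From HB Require Import structures.
From mathcomp Require Import all_boot all_algebra.
From mathcomp Require Import boolp.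
From Stdlib Require Import Relation_Operators.

Set Implicit Arguments.
Unset Strict Implicit.
Unset Printing Implicit Defensive.
Import GRing.Theory.
Local Open Scope ring_scope.

Lemma iter_fixpoint (T : Type) (f : T -> T) (mu : T -> nat) (m : nat) :
  (forall x, f x <> x -> (mu (f x) < mu x)%N) -> (forall x, (mu x <= m)%N) ->
  forall x, f (iter m.+1 f x) = iter m.+1 f x.
Proof.
move=> mu_dec mu_bnd.
suff fixed_after n x : (mu x < n)%N -> f (iter n f x) = iter n f x.
  by move=> x; apply: fixed_after; rewrite ltnS.
elim: n x => [//|n IHn] x lt_x.
have [fx_eq|fx_neq] := pselect (f x = x).
  have iter_x j : iter j f x = x by elim: j => //= j ->.
  by rewrite iter_x.
rewrite iterSr; apply: IHn; apply: leq_trans (mu_dec x fx_neq) _.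
by rewrite -ltnS.
Qed.

Section KConsistency.
Variables (X TA : finType) (k : nat).
Implicit Types (F : {set X} -> {set {ffun X -> option TA}}) (K L : {set X}).

Lemma kc_step_sub F L : kc_step k F L \subset F L.
Proof. by apply/subsetP => f; rewrite inE => /andP[]. Qed.

Definition kc_size F : nat := (\sum_(L : {set X}) #|F L|)%N.

Lemma kc_size_bound F : (kc_size F <= #|{: {set X}}| * #|{: {ffun X -> option TA}}|)%N.
Proof. by rewrite /kc_size -sum_nat_const; apply: leq_sum => L _; apply: max_card. Qed.

Lemma kc_size_step F : kc_step k F <> F -> (kc_size (kc_step k F) < kc_size F)%N.
Proof.
move=> changed.
have [L neq_L] : exists L, kc_step k F L != F L.
  apply: contrapT => all_eq; apply: changed; apply: funext => L.
  by apply/eqP/negPn/negP => neq_L; apply: all_eq; exists L.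
rewrite /kc_size (bigD1 L) //= [Y in (_ < Y)%N](bigD1 L) //= -addSn.
apply: leq_add; last by apply: leq_sum => L' _; apply: subset_leq_card; apply: kc_step_sub.
rewrite ltn_neqAle subset_leq_card ?kc_step_sub // andbT.
by apply: contra neq_L => /eqP eq_card; rewrite eqEcard kc_step_sub eq_card leqnn.
Qed.

Variables (S : signature) (XX : structure S X) (A : structure S TA).

Lemma kc_stable : kc_step k (kc_family XX A k) = kc_family XX A k.
Proof. exact: iter_fixpoint kc_size_step kc_size_bound _. Qed.

Lemma kc_restr K L f :
  L \subset K -> f \in kc_family XX A k K -> restr L f \in kc_family XX A k L.
Proof.
move=> sub_LK; rewrite -{1}kc_stable inE => /and3P[_ _ /forallP/(_ L)].
by rewrite sub_LK.
Qed.

End KConsistency.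

Section HomomorphismAccepted.
Variables (S : signature) (X TA : finType) (XX : structure S X).
Variables (A : structure S TA) (k : nat) (h : X -> TA).
Hypothesis hom_h : is_hom XX A h.

Definition hom_on (K : {set X}) : {ffun X -> option TA} :=
  [ffun x => if x \in K then Some (h x) else None].

Lemma restr_hom_on (K L : {set X}) : L \subset K -> restr L (hom_on K) = hom_on L.
Proof.
move=> sub_LK; apply/ffunP => x; rewrite !ffunE.
by case: ifP => // xL; rewrite (subsetP sub_LK x xL).
Qed.

(* Restrictions of a homomorphism are partial homomorphisms ... *)
Lemma hom_on_init (K : {set X}) : (#|K| <= k)%N -> hom_on K \in kc_init XX A k K.
Proof.
case: hom_h => h_sort h_rel le_K; rewrite inE le_K; apply/asboolP; split; [|split].
- by move=> x; rewrite ffunE; case: (x \in K).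
- by move=> x a; rewrite ffunE; case: (x \in K) => // -[<-].
- move=> R vs R_vs all_K; exists (map h vs); last exact: h_rel.
  elim: vs all_K {R_vs} => //= v vs IHvs /andP[vK all_K].
  by rewrite ffunE vK IHvs.
Qed.

(* ... and, being mutually compatible, none of them is ever removed. *)
Lemma hom_on_kc_family (K : {set X}) :
  (#|K| <= k)%N -> hom_on K \in kc_family XX A k K.
Proof.
rewrite /kc_family; elim: (_ * _)%N.+1 K => [|n IHn] K le_K; first exact: hom_on_init.
rewrite iterS inE IHn //=; apply/andP; split; apply/forallP => K'; apply/implyP.
  move=> /andP[sub_K' le_K']; apply/existsP; exists (hom_on K').
  by rewrite IHn //= restr_hom_on.
move=> sub_K'; rewrite restr_hom_on //; apply: IHn.
exact: leq_trans (subset_leq_card sub_K') le_K.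
Qed.

(* The relaxation accepts every instance mapping to [A]: the indicator of the
   restrictions of [h] solves the affine system over any Abelian group. *)
Lemma hom_accepts (G : zmodType) (one : G) : affine_accepts XX A k one.
Proof.
pose x K f : G := if f == hom_on K then one else 0.
have x_sum (K : {set X}) (P : pred {ffun X -> option TA}) : (#|K| <= k)%N ->
    \sum_(f in kc_family XX A k K | P f) x K f = if P (hom_on K) then one else 0.
  move=> le_K; rewrite (bigID (pred1 (hom_on K))) /= [Y in _ + Y]big1; last first.
    by move=> f /andP[_ /negbTE]; rewrite /x => ->.
  rewrite addr0; case: ifP => P_h.
    rewrite (big_pred1 (hom_on K)) => [|f]; first by rewrite /x eqxx.
    by rewrite /= andbC; case: eqP => // ->; rewrite hom_on_kc_family.
  by rewrite big1 // => f /andP[/andP[_ Pf] /eqP f_h]; rewrite f_h P_h in Pf.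
exists x; split => [K le_K|K L le_K sub_LK g _].
  by rewrite -(x_sum K xpredT le_K); apply: eq_bigl => f; rewrite andbT.
by rewrite x_sum // restr_hom_on // /x eq_sym.
Qed.

End HomomorphismAccepted.

Section KappaHomAccepted.
Variables (S : signature) (X TA : finType) (XX : structure S X).
Variables (A : structure S TA) (k : nat) (G : zmodType).
Variable phi : kcarrier XX A k G -> G.
Hypothesis hom_phi : is_hom (projT2 (kappaG A k G XX)) (Gtemplate G) phi.

Definition phi_at (K : Kidx X k) (b : {ffun X -> option TA} -> G) : G :=
  phi (kproj XX A (K, b)).

(* Each copy of [G ^ F_K] carries the pointwise relations of [G], so [phi_at K]
   preserves addition and constants: it is an affine map [G ^ F_K -> G]. *)
Lemma phi_atD K b1 b2 : phi_at K (fun f => b1 f + b2 f) = phi_at K b1 + phi_at K b2.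
Proof.
have [_ phi_rel] := hom_phi; rewrite /phi_at.
have [|y1 [y2 [y3 [[-> -> ->] <-]]]] // := phi_rel None
  [:: kproj XX A (K, b1); kproj XX A (K, b2); kproj XX A (K, fun f => b1 f + b2 f)].
split => //; exists K, [:: b1; b2; fun f => b1 f + b2 f]; split => // f _.
by exists (b1 f), (b2 f), (b1 f + b2 f).
Qed.

Lemma phi_at_cst K (c : G) : phi_at K (fun _ => c) = c.
Proof.
have [_ phi_rel] := hom_phi.
have : Grel (Some c) [:: phi_at K (fun _ => c)].
  apply: (phi_rel (Some c) [:: kproj XX A (K, fun _ => c)]).
  by split; last exists K, [:: fun _ => c].
by case.
Qed.

Lemma phi_at_sum K (I : Type) (r : seq I) (P : pred I)
    (B : I -> {ffun X -> option TA} -> G) :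
  phi_at K (fun f => \sum_(i <- r | P i) B i f) = \sum_(i <- r | P i) phi_at K (B i).
Proof.
elim: r => [|i r IHr].
  rewrite big_nil -[RHS](phi_at_cst K 0).
  by congr phi_at; apply: funext => f; rewrite big_nil.
rewrite big_cons -IHr; case: ifP => Pi; rewrite -?phi_atD;
  by congr phi_at; apply: funext => f; rewrite big_cons Pi.
Qed.

Lemma phi_at_restr (K L : Kidx X k) b b' :
  sval L \subset sval K ->
  (forall f, f \in kc_family XX A k (sval K) -> b f = b' (restr (sval L) f)) ->
  phi_at K b = phi_at L b'.
Proof.
move=> sub_LK eq_b; rewrite /phi_at; congr phi; apply: eq_exist.
apply: funext => d; apply: propext; split.
  by apply: rst_trans; apply: rst_sym; apply: rst_step.
by apply: rst_trans; apply: rst_step.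
Qed.

Definition indicator (one : G) (f : {ffun X -> option TA}) : {ffun X -> option TA} -> G :=
  fun g => if g == f then one else 0.

Definition phi_solution (one : G) (K : {set X}) (f : {ffun X -> option TA}) : G :=
  if insub K is Some K' then phi_at K' (indicator one f) else 0.

Lemma phi_solutionE (one : G) (K : {set X}) (le_K : (#|K| <= k)%N) f :
  phi_solution one K f = phi_at (exist _ K le_K) (indicator one f).
Proof. by rewrite /phi_solution insubT. Qed.

Lemma sum_indicator (one : G) (K : {set X}) (P : pred {ffun X -> option TA}) f :
  f \in kc_family XX A k K ->
  \sum_(f' in kc_family XX A k K | P f') indicator one f' f = if P f then one else 0.
Proof.
move=> Ff; rewrite /indicator; case: ifP => Pf.
  rewrite (bigD1 f) /=; last by rewrite Ff Pf.
  rewrite eqxx big1 ?addr0 // => f' /andP[_ neq_f'].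
  by rewrite eq_sym (negbTE neq_f').
rewrite big1 // => f' /andP[_ Pf'].
by case: eqP => // eq_f; rewrite eq_f Pf' in Pf.
Qed.

Lemma kappa_hom_accepts (one : G) : affine_accepts XX A k one.
Proof.
exists (phi_solution one); split => [K le_K|K L le_K sub_LK g _].
  under eq_bigr => f _ do rewrite (phi_solutionE _ le_K).
  rewrite -phi_at_sum -[RHS](phi_at_cst (exist _ K le_K)).
  apply: phi_at_restr => //= f Ff.
  by rewrite -[RHS](sum_indicator one xpredT Ff); apply: eq_bigl => f'; rewrite andbT.
have le_L := leq_trans (subset_leq_card sub_LK) le_K.
under eq_bigr => f _ do rewrite (phi_solutionE _ le_K).
rewrite (phi_solutionE _ le_L) -phi_at_sum.
by apply: phi_at_restr => //= f Ff; rewrite sum_indicator.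
Qed.

End KappaHomAccepted.

Section CyclicMultiplication.
Variables (G : zmodType) (one : G).
Hypothesis G_cyclic : forall x : G, exists z : int, x = one *~ z.

(* A cyclic group generated by [one] is a ring with unit [one]: the product
   [u * y] is [y *~ z] for any integer [z] with [u = one *~ z]. *)
Definition cmul (u y : G) : G := y *~ sval (cid (G_cyclic u)).

(* The product does not depend on the chosen integer, since the annihilator
   of [one] annihilates every element of the cyclic group. *)
Lemma cmulE (u y : G) (z : int) : u = one *~ z -> cmul u y = y *~ z.
Proof.
rewrite /cmul; case: (cid (G_cyclic u)) => z' /= -> eq_z'.
have [c ->] := G_cyclic y.
by rewrite mulrzAC eq_z' -mulrzAC.
Qed.

Lemma cmulDl (u v y : G) : cmul (u + v) y = cmul u y + cmul v y.
Proof.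
have [zu eq_u] := G_cyclic u; have [zv eq_v] := G_cyclic v.
have eq_uv : u + v = one *~ (zu + zv) by rewrite mulrzDr -eq_u -eq_v.
by rewrite (cmulE _ eq_u) (cmulE _ eq_v) (cmulE _ eq_uv) mulrzDr.
Qed.

Lemma cmul_sumr (u : G) (I : Type) (r : seq I) (P : pred I) (F : I -> G) :
  cmul u (\sum_(i <- r | P i) F i) = \sum_(i <- r | P i) cmul u (F i).
Proof. exact: mulrz_suml. Qed.

Lemma cmul_one (u : G) : cmul u one = u.
Proof. by have [z eq_u] := G_cyclic u; rewrite (cmulE _ eq_u). Qed.

End CyclicMultiplication.

Section SolutionToKappaHom.
Variables (S : signature) (X TA : finType) (XX : structure S X).
Variables (A : structure S TA) (k : nat) (G : zmodType) (one : G).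
Hypothesis G_cyclic : forall x : G, exists z : int, x = one *~ z.
Variable x : {set X} -> {ffun X -> option TA} -> G.
Hypothesis x_sum : forall K : {set X}, (#|K| <= k)%N ->
  \sum_(f in kc_family XX A k K) x K f = one.
Hypothesis x_compat : forall K L : {set X}, (#|K| <= k)%N -> L \subset K ->
  forall g, g \in kc_family XX A k L ->
  \sum_(f in kc_family XX A k K | restr L f == g) x K f = x L g.

Definition eval_solution (d : kdom X TA k G) : G :=
  \sum_(f in kc_family XX A k (sval d.1)) cmul G_cyclic (d.2 f) (x (sval d.1) f).

(* The compatibility equations say exactly that these forms agree on
   elements identified by restriction ... *)
Lemma eval_solution_base (d e : kdom X TA k G) :
  kbase XX A d e -> eval_solution d = eval_solution e.
Proof.
case: d e => [[K le_K] b] [[L le_L] b'] [/= sub_LK eq_b]; rewrite /eval_solution /=.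
rewrite (eq_bigr (fun f => cmul G_cyclic (b' (restr L f)) (x K f))); last by move=> f /eq_b ->.
rewrite (partition_big (restr L) (mem (kc_family XX A k L))); last first.
  by move=> f; apply: kc_restr.
apply: eq_bigr => g Fg; rewrite -(x_compat le_K sub_LK Fg) cmul_sumr.
by apply: eq_bigr => f /andP[_ /eqP ->].
Qed.

Lemma eval_solution_equiv (d e : kdom X TA k G) :
  kequiv XX A d e -> eval_solution d = eval_solution e.
Proof.
elim=> [? ? /eval_solution_base //|//|? ? _ -> //|? ? ? _ -> _ -> //].
Qed.

Definition solution_map (P : kcarrier XX A k G) : G :=
  eval_solution (sval (cid (proj2_sig P))).

Lemma solution_mapE (d : kdom X TA k G) : solution_map (kproj XX A d) = eval_solution d.
Proof.
rewrite /solution_map; case: (cid _) => d' /= eq_d.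
by apply/esym/eval_solution_equiv; rewrite eq_d; apply: rst_refl.
Qed.

(* Constants are evaluated correctly because the weights of each [F_K]
   sum to [one], and sums because the evaluation is additive. *)
Lemma solution_map_hom :
  is_hom (projT2 (kappaG A k G XX)) (Gtemplate G) solution_map.
Proof.
split=> // R s [arR [[K le_K] [bs [eq_s rel_bs]]]]; subst s.
rewrite -map_comp (eq_map (fun b => solution_mapE (exist _ K le_K, b))) /=.
case: R arR rel_bs => [c|] /=.
  case: bs => [|b [|]] //= _ rel_b; congr [:: _]; rewrite /eval_solution /=.
  rewrite (eq_bigr (fun f => cmul G_cyclic c (x K f))); last by move=> f /rel_b [->].
  by rewrite -cmul_sumr x_sum ?cmul_one.
case: bs => [|b1 [|b2 [|b3 []]]] //= _ rel_bs.
do 3!eexists; split; first by reflexivity.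
rewrite /eval_solution /= -big_split; apply: eq_bigr => f Ff /=.
by have [y1 [y2 [y3 [[-> -> ->] <-]]]] := rel_bs f Ff; rewrite cmulDl.
Qed.

End SolutionToKappaHom.

Lemma accepts_kappa_hom (S : signature) (X TA : finType) (XX : structure S X)
    (A : structure S TA) (k : nat) (G : zmodType) (one : G)
    (G_cyclic : forall x : G, exists z : int, x = one *~ z) :
  affine_accepts XX A k one -> homExists (projT2 (kappaG A k G XX)) (Gtemplate G).
Proof.
by case=> x [x_sum x_compat]; exists (solution_map G_cyclic x); apply: solution_map_hom.
Qed.

Theorem mainTheorem11 (G : zmodType) (one : G)
    (Hcyclic : forall x : G, exists z : int, x = (one *~ z)%R)
    (S : signature) (TA : finType) (TA' : Type)
    (A : structure S TA) (A' : structure S TA')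
    (HAA' : homExists A A') (k : nat) (Hk : (1 <= k)%N) :
  @affine_solves S TA TA' A A' k G one <->
  @is_reduction S (sigG G) TA TA' G G A A' (Gtemplate G) (Gtemplate G)
    (@kappaG S TA A k G).
Proof.
split=> [solves X XX | reduction X XX no_hom_A' accepts].
  split=> [[h hom_h] | [phi hom_phi]].
    exact: accepts_kappa_hom Hcyclic (hom_accepts k hom_h one).
  apply: contrapT => no_hom_A'; apply: (solves X XX no_hom_A').
  exact: kappa_hom_accepts hom_phi one.
exact/no_hom_A'/(proj2 (reduction X XX))/(accepts_kappa_hom Hcyclic accepts).
Qed.
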